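(* Let $S$ be a finite set, $n\ge 2$, and $R_1,\dots,R_n$ finite sets of words on $S\cup S^{-1}$; let $\tilde R=[R_n^{S_0},[R_{n-1}^{S_0},\dots[R_2^{S_0},R_1]\dots]]$. Let $\varphi:F(S)\to\mathbb F$ be a homomorphism to a non-abelian free group $\mathbb F$ with non-abelian image. Then $\varphi$ is trivial on every element of $\tilde R$ if and only if there is some $i$ such that $\varphi$ is trivial on every element of $R_i$.
   Context: $F(S)$ is the free group on $S$. $S_0=S\cup\{1\}$; for sets $R,R'$ of words on $S\cup S^{-1}$, $R^{S_0}$ is the set of words obtained by conjugating elements of $R$ by elements of $S_0$, and $[R^{S_0},R']$ is the set of commutators $[u,v]$ with $u\in R^{S_0}$, $v\in R'$. *)

(* A word on S ∪ S^{-1} is a seq of letters (s, b) with b = true meaning s^{-1}.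
   The free group F(S) is the set of freely reduced words; [reduce w] is the
   free-reduction normal form, so w = 1 in F(S) iff reduce w = [::]. *)
From mathcomp Require Import all_boot.
Set Implicit Arguments. Unset Strict Implicit. Unset Printing Implicit Defensive.

Definition word (S : Type) := seq (S * bool).

Definition inv_letter (S : Type) (l : S * bool) : S * bool := (l.1, ~~ l.2).

Definition inv_word (S : Type) (w : word S) : word S := rev (map (@inv_letter S) w).

Definition reduce (S : eqType) (w : word S) : word S :=
  foldr (fun l acc => match acc with
                      | l' :: acc' => if l' == inv_letter l then acc' else l :: acc
                      | [::] => [:: l]
                      end) [::] w.

(* The homomorphism F(S) -> F(T) determined by the images f s of the generators. *)
Definition subst (S T : Type) (f : S -> word T) (w : word S) : word T :=
  flatten (map (fun l => if l.2 then inv_word (f l.1) else f l.1) w).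

Definition kills (S : Type) (T : eqType) (f : S -> word T) (w : word S) : Prop :=
  reduce (subst f w) = [::].

Definition nonabelian_image (S : Type) (T : eqType) (f : S -> word T) : Prop :=
  exists u v : word S, reduce (subst f (u ++ v)) <> reduce (subst f (v ++ u)).

Definition conjw (S : Type) (s : S) (r : word S) : word S :=
  (s, true) :: r ++ [:: (s, false)].

Definition commw (S : Type) (u v : word S) : word S :=
  inv_word u ++ inv_word v ++ u ++ v.

(* R^{S_0}: conjugates of elements of R by elements of S ∪ {1} *)
Definition conjS0 (S : finType) (R : seq (word S)) : seq (word S) :=
  R ++ [seq conjw s r | s <- enum S, r <- R].

Definition commset (S : finType) (R R' : seq (word S)) : seq (word S) :=
  [seq commw u v | u <- conjS0 R, v <- R'].

Fixpoint Rtilde (S : finType) (R : nat -> seq (word S)) (k : nat) : seq (word S) :=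
  match k with
  | 0 => R 1
  | 1 => R 1
  | k'.+1 => commset (R k) (Rtilde R k')
  end.

From mathcomp Require Import all_boot zify.
Set Implicit Arguments. Unset Strict Implicit. Unset Printing Implicit Defensive.

(* The "if" direction is immediate: a commutator [u, v] is
   trivial as soon as u or v is, and conjugates of trivial elements are
   trivial.  For the "only if" direction we use two classical properties of
   free groups:
   - commutative transitivity: if a <> 1 commutes with b and with d, then b
     commutes with d ([comm_trans]);
   - if x <> 1 commutes with its conjugate x^g, then g commutes with x
     ([comm_conj_comm]).
   Both rest on the description of the centraliser of a cyclically reduced
   word c: every element commuting with c is a power of a root z of c
   ([centralizer_cyclic]), proved by a cancellation analysis together with the
   Lyndon-Schuetzenberger theorem on commuting words.  Given a non-killed
   v in [Rtilde R k] and a non-killed r in [R (k+1)], if every commutator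
   [u, v] with u in [R (k+1)]^{S_0} were killed, phi(r) would commute with all
   its conjugates phi(r)^phi(s), hence all phi(s) would commute with phi(r) and
   with each other, making the image abelian. *)

Notation "u ≡ v" := (reduce u = reduce v) (at level 70, no associativity).

Section Inversion.
Variable T : Type.
Implicit Types (l : T * bool) (u v : word T).

Lemma inv_letterK : involutive (@inv_letter T).
Proof. by case=> a b; rewrite /inv_letter /= negbK. Qed.

Lemma inv_word_cat u v : inv_word (u ++ v) = inv_word v ++ inv_word u.
Proof. by rewrite /inv_word map_cat rev_cat. Qed.

Lemma inv_wordK : involutive (@inv_word T).
Proof.
move=> u; rewrite /inv_word map_rev revK -map_comp -[RHS]map_id.
by apply: eq_map => l /=; rewrite inv_letterK.
Qed.

Lemma inv_word_cons l u : inv_word (l :: u) = inv_word u ++ [:: inv_letter l].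
Proof. by rewrite /inv_word /= rev_cons cats1. Qed.

Lemma inv_word_rcons u l : inv_word (rcons u l) = inv_letter l :: inv_word u.
Proof. by rewrite -cats1 inv_word_cat. Qed.

Lemma size_inv_word u : size (inv_word u) = size u.
Proof. by rewrite /inv_word size_rev size_map. Qed.

End Inversion.

Section FreeReduction.
Variable T : eqType.
Implicit Types (l : T * bool) (a b u v w x y z p h r acc : word T).

Definition push l acc : word T :=
  match acc with
  | l' :: acc' => if l' == inv_letter l then acc' else l :: acc
  | [::] => [:: l]
  end.

Fixpoint reduced w : bool :=
  match w with
  | [::] => true
  | l :: w' => reduced w' && (if w' is l' :: _ then l' != inv_letter l else true)
  end.

Lemma inv_letter_neq l : (inv_letter l == l) = false.
Proof. by case: l => a b; apply/eqP => -[]; case: b. Qed.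

Definition reduce_onto u acc := foldr push acc u.

Lemma reduced_push l acc : reduced acc -> reduced (push l acc).
Proof.
case: acc => [|a acc] //= /andP[Hacc Ha].
by case: ifP => Hal //=; rewrite Hacc Ha Hal.
Qed.

Lemma reduced_reduce w : reduced (reduce w).
Proof. by elim: w => //= l w IH; apply: reduced_push. Qed.

Lemma reduced_reduce_onto u acc : reduced acc -> reduced (reduce_onto u acc).
Proof. by move=> H; elim: u => //= l u IH; apply: reduced_push. Qed.

Lemma push_inv l acc : reduced acc -> push l (push (inv_letter l) acc) = acc.
Proof.
case: acc => [|a acc] /=; first by rewrite eqxx.
case/andP=> Hacc Ha; case: ifP => [/eqP|_]; last by rewrite /= eqxx.
rewrite inv_letterK => <-.
by case: acc Hacc Ha => [|b acc] //= _ /negbTE ->.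
Qed.

Lemma reduce_onto_push l u acc : reduced acc -> reduced u ->
  reduce_onto (push l u) acc = push l (reduce_onto u acc).
Proof.
move=> Hacc; case: u => [|a u] //= Hu; case: ifP => [/eqP Ha|] //.
by rewrite Ha push_inv //; apply: reduced_reduce_onto.
Qed.

Lemma reduce_onto_reduce u acc :
  reduced acc -> reduce_onto u acc = reduce_onto (reduce u) acc.
Proof.
move=> Hacc; elim: u => //= l u IH.
by rewrite IH -reduce_onto_push // reduced_reduce.
Qed.

Lemma reduce_cat u v : reduce (u ++ v) = reduce_onto u (reduce v).
Proof. exact: foldr_cat. Qed.

Lemma reduce_id w : reduced w -> reduce w = w.
Proof.
elim: w => //= l w IH /andP[Hw Hl]; rewrite IH //.
by case: w {IH Hw} Hl => //= a w /negbTE ->.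
Qed.

Lemma reduce_idem w : reduce (reduce w) = reduce w.
Proof. exact/reduce_id/reduced_reduce. Qed.

Lemma reduce_catl u v : reduce (u ++ v) = reduce (reduce u ++ v).
Proof. by rewrite !reduce_cat [LHS]reduce_onto_reduce // reduced_reduce. Qed.

Lemma reduce_catr u v : reduce (u ++ v) = reduce (u ++ reduce v).
Proof. by rewrite !reduce_cat reduce_idem. Qed.

Lemma reduce_ctx x u u' y : u ≡ u' -> x ++ u ++ y ≡ x ++ u' ++ y.
Proof.
move=> H; rewrite reduce_catr [in RHS]reduce_catr; congr (reduce (_ ++ _)).
by rewrite reduce_catl H -reduce_catl.
Qed.

Lemma reduce_catl_eq u u' y : u ≡ u' -> u ++ y ≡ u' ++ y.
Proof. exact: (@reduce_ctx [::]). Qed.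

Lemma reduce_catr_eq x v v' : v ≡ v' -> x ++ v ≡ x ++ v'.
Proof. by move=> H; rewrite -(cats0 v) -(cats0 v') (reduce_ctx x [::] H). Qed.

Lemma reduce_inv_r u : reduce (u ++ inv_word u) = [::].
Proof.
elim: u => //= l u IH.
rewrite inv_word_cons catA reduce_cat reduce_onto_reduce //= IH /=.
by rewrite eqxx.
Qed.

Lemma reduce_inv_l u : reduce (inv_word u ++ u) = [::].
Proof. by rewrite -{2}(inv_wordK u) reduce_inv_r. Qed.

Lemma cancel_mid x u y : x ++ u ++ inv_word u ++ y ≡ x ++ y.
Proof. by rewrite (catA u) (reduce_ctx x y (u' := [::]) (reduce_inv_r u)). Qed.

Lemma cancel_mid_inv x u y : x ++ inv_word u ++ u ++ y ≡ x ++ y.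
Proof. by rewrite -{2}(inv_wordK u) cancel_mid. Qed.

Lemma reduce_inv_eq u v : u ≡ v -> inv_word u ≡ inv_word v.
Proof.
move=> H; rewrite -[inv_word u]cats0 -(cancel_mid (inv_word u) v [::]).
rewrite (reduce_ctx (inv_word u) _ (esym H)).
by rewrite -[inv_word u ++ _]cat0s cancel_mid_inv cats0.
Qed.

Lemma trivial_inv u : reduce u = [::] -> reduce (inv_word u) = [::].
Proof. exact: (reduce_inv_eq (v := [::])). Qed.

Lemma trivial_conj h r : reduce r = [::] -> reduce (inv_word h ++ r ++ h) = [::].
Proof. by move=> H; rewrite (reduce_ctx (inv_word h) h (u' := [::]) H) reduce_inv_l. Qed.

Lemma conj_mul p x y :
  (inv_word p ++ x ++ p) ++ (inv_word p ++ y ++ p) ≡ inv_word p ++ (x ++ y) ++ p.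
Proof. by have := cancel_mid (inv_word p ++ x) p (y ++ p); rewrite -!catA. Qed.

Lemma conjK p x : inv_word p ++ (p ++ x ++ inv_word p) ++ p ≡ x.
Proof.
rewrite -!catA (cancel_mid_inv [::] p) /=.
by have := cancel_mid_inv x p [::]; rewrite !cats0 => ->.
Qed.

Lemma conjVK p x : p ++ (inv_word p ++ x ++ p) ++ inv_word p ≡ x.
Proof. by have := conjK (inv_word p) x; rewrite inv_wordK. Qed.

Lemma size_push l acc : size (push l acc) <= (size acc).+1.
Proof. by case: acc => //= a acc; case: ifP => //= _; apply: leqW. Qed.

Lemma size_reduce w : size (reduce w) <= size w.
Proof. by elim: w => //= l w IH; apply: leq_trans (size_push l _) _. Qed.

Lemma size_reduce_ctx u w v :
  size (reduce w) <= size (reduce (u ++ w ++ v)) + size u + size v.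
Proof.
have -> : w ≡ inv_word u ++ (u ++ w ++ v) ++ inv_word v.
  rewrite -!catA (cancel_mid_inv [::] u) /=.
  by have := cancel_mid w v [::]; rewrite !cats0.
rewrite (reduce_ctx _ _ (esym (reduce_idem _))).
apply: leq_trans (size_reduce _) _.
rewrite !size_cat !size_inv_word; lia.
Qed.

Definition comm x y := x ++ y ≡ y ++ x.

Lemma comm_sym x y : comm x y -> comm y x.
Proof. by []. Qed.

Lemma comm_eql x x' y : x ≡ x' -> comm x y -> comm x' y.
Proof. by move=> H; rewrite /comm -(reduce_catl_eq y H) -(reduce_catr_eq y H). Qed.

Lemma comm_eqr x y y' : y ≡ y' -> comm x y -> comm x y'.
Proof. by move=> H /comm_sym C; apply/comm_sym/(comm_eql H). Qed.

Lemma comm_nil x : comm x [::].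
Proof. by rewrite /comm cats0. Qed.

Lemma comm_cat x y z : comm x y -> comm x z -> comm x (y ++ z).
Proof.
by move=> H1 H2; rewrite /comm catA (reduce_catl_eq z H1) -catA (reduce_catr_eq y H2) catA.
Qed.

Lemma comm_invr x y : comm x y -> comm x (inv_word y).
Proof.
move=> H; rewrite /comm -(cancel_mid_inv [::] y (x ++ inv_word y)) /=.
rewrite (catA y x) (reduce_ctx (inv_word y) (inv_word y) (esym H)) -catA.
by have := cancel_mid (inv_word y ++ x) y [::]; rewrite cats0 -!catA => ->; rewrite cats0.
Qed.

Lemma comm_invl x y : comm x y -> comm (inv_word x) y.
Proof. by move/comm_sym/comm_invr. Qed.

Lemma comm_conj p x y :
  comm x y -> comm (inv_word p ++ x ++ p) (inv_word p ++ y ++ p).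
Proof. by move=> H; rewrite /comm !conj_mul (reduce_ctx (inv_word p) p H). Qed.

Lemma unconj_comm p x y :
  comm (inv_word p ++ x ++ p) (inv_word p ++ y ++ p) -> comm x y.
Proof.
move=> /(comm_conj (inv_word p)); rewrite inv_wordK.
by move/(comm_eql (conjVK p x))/(comm_eqr (conjVK p y)).
Qed.

Lemma conj_fix_comm p x : inv_word p ++ x ++ p ≡ x -> comm p x.
Proof.
move=> H; rewrite /comm -(reduce_catr_eq p H).
by rewrite (cancel_mid [::] p (x ++ p)).
Qed.

Lemma comm_of_commw a b : reduce (inv_word a ++ inv_word b ++ a ++ b) = [::] -> comm a b.
Proof.
move=> H; rewrite /comm.
have := reduce_catr_eq (b ++ a) (v' := [::]) H; rewrite cats0 => <-.
by rewrite -catA (cancel_mid b a) (cancel_mid [::] b).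
Qed.

Lemma commw_trivial_l a b :
  reduce a = [::] -> reduce (inv_word a ++ inv_word b ++ a ++ b) = [::].
Proof.
move=> H; rewrite reduce_catl trivial_inv //=.
by rewrite reduce_catr (reduce_catl a b) H /= -reduce_catr reduce_inv_l.
Qed.

Lemma commw_trivial_r a b :
  reduce b = [::] -> reduce (inv_word a ++ inv_word b ++ a ++ b) = [::].
Proof.
move=> H; rewrite (reduce_ctx (inv_word a) (a ++ b) (u' := [::])) /=; last first.
  by rewrite trivial_inv.
by rewrite catA reduce_catr H cats0 reduce_inv_l.
Qed.

End FreeReduction.

Section ReducedWords.
Variable T : eqType.
Implicit Types (l : T * bool) (a b c u v w x y z p : word T).

Lemma reduced_catl u v : reduced (u ++ v) -> reduced u.
Proof.
elim: u => //= l u IH /andP[H1 H2]; rewrite IH //.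
by case: u {IH H1} H2.
Qed.

Lemma reduced_catr u v : reduced (u ++ v) -> reduced v.
Proof. by elim: u => //= l u IH /andP[/IH]. Qed.

Lemma reduced_join x z y :
  z != [::] -> reduced (x ++ z) -> reduced (z ++ y) -> reduced (x ++ z ++ y).
Proof.
move=> Hz; elim: x => //= l x IH /andP[H1 H2] H3; rewrite IH //=.
by case: x {IH H1 H3} H2 => [|a x] //; case: z Hz.
Qed.

Lemma reduced_pair x y l : reduced (x ++ l :: inv_letter l :: y) = false.
Proof.
apply/negP => /reduced_catr /(@reduced_catl [:: l; inv_letter l] y) /=.
by rewrite eqxx.
Qed.

Lemma not_reduced w :
  reduced w = false -> exists x y l, w = x ++ l :: inv_letter l :: y.
Proof.
elim: w => //= l w IH; case Hw: (reduced w) => /=.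
  case: w Hw {IH} => // a w _ /negbFE/eqP ->.
  by exists [::], w, l.
move=> _; case: (IH Hw) => x [y [l' ->]].
by exists (l :: x), y, l'.
Qed.

Lemma reduced_inv w : reduced (inv_word w) = reduced w.
Proof.
suff H w' : reduced w' -> reduced (inv_word w').
  by apply/idP/idP => [/H|/H //]; rewrite inv_wordK.
move=> Hw; apply/negPn/negP => /negbTE/not_reduced [x [y [l E]]].
move: Hw; rewrite -(inv_wordK w') E !inv_word_cat !inv_word_cons /=.
by rewrite -!catA /= inv_letterK reduced_pair.
Qed.

Lemma cancellation_split u v : reduced u -> reduced v ->
  exists u1 t v1, [/\ u = u1 ++ t, v = inv_word t ++ v1 & reduce (u ++ v) = u1 ++ v1].
Proof.
elim: u => [|l u IH] Hu Hv; first by exists [::], [::], v; rewrite reduce_id.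
move: Hu => /= /andP[Hu Hl].
have [u1 [t [v1 [Eu Ev Er]]]] := IH Hu Hv.
subst u; rewrite Er; clear IH Hu.
case: u1 Er Hl => [|a u1] Er Hl /=; last first.
  by rewrite (negbTE Hl); exists [:: l, a & u1], t, v1.
case: v1 Ev Er => [|a v1] Ev Er; first by exists [:: l], t, [::].
rewrite /=; case: ifP => [/eqP Ha|Ha]; last by exists [:: l], t, (a :: v1).
exists [::], (l :: t), v1; split => //.
by rewrite Ev inv_word_cons -catA Ha.
Qed.

(* Every nontrivial reduced word is a conjugate p c p^{-1} of a cyclically
   reduced word c, i.e. one with c c reduced. *)
Lemma cyclic_decomposition a : reduced a -> a != [::] ->
  exists p c, [/\ a = p ++ c ++ inv_word p, c != [::] & reduced (c ++ c)].
Proof.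
elim: {a}(size a) {-2}a (leqnn (size a)) => [|n IH] [|y a] // Hsz Hr _.
case/lastP: a Hsz Hr => [|m x] Hsz Hr.
  by exists [::], [:: y]; split => //=; rewrite eq_sym inv_letter_neq.
have [/eqP Exy | Exy] := boolP (x == inv_letter y).
  subst x; case: m Hsz Hr => [|b m] Hsz Hr; first by move: Hr; rewrite /= eqxx ?andbF.
  have Hm : reduced (b :: m).
    by move: Hr; rewrite -cats1 -!cat_cons => /reduced_catl /andP[].
  have [|p [c [Ep Hc Hcc]]] := IH (b :: m) _ Hm erefl.
    by move: Hsz; rewrite /= size_rcons ltnS => /ltnW.
  exists (y :: p), c; split => //.
  by rewrite inv_word_cons -cats1 Ep /= !catA.
exists [::], (y :: rcons m x); split; rewrite ?cats0 //.
move: Hr; rewrite -cats1 -cat_cons -catA => Hr; apply: reduced_join => //=.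
move: Hr; rewrite /= => ->; rewrite /=.
by apply: contra Exy => /eqP ->; rewrite inv_letterK.
Qed.

End ReducedWords.

Section Powers.
Variable T : eqType.
Implicit Types (u v x y z p : word T).

Definition wpow z n : word T := flatten (nseq n z).

Lemma wpowS z n : wpow z n.+1 = z ++ wpow z n.
Proof. by []. Qed.

Lemma wpow1 z : wpow z 1 = z.
Proof. by rewrite wpowS cats0. Qed.

Lemma wpowD z m n : wpow z (m + n) = wpow z m ++ wpow z n.
Proof. by elim: m => //= m IH; rewrite addSn !wpowS IH catA. Qed.

Lemma wpowSr z n : wpow z n.+1 = wpow z n ++ z.
Proof. by rewrite -addn1 wpowD wpow1. Qed.

Lemma wpowM z j N : wpow (wpow z j) N = wpow z (j * N).
Proof. by elim: N => [|N IH]; rewrite ?muln0 // wpowS IH mulnS wpowD. Qed.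

Lemma size_wpow z n : size (wpow z n) = n * size z.
Proof. by elim: n => //= n IH; rewrite wpowS size_cat IH mulSn. Qed.

Lemma inv_wpow z n : inv_word (wpow z n) = wpow (inv_word z) n.
Proof. by elim: n => //= n IH; rewrite wpowS inv_word_cat IH wpowSr. Qed.

Lemma wpow_nil n : wpow [::] n = [::].
Proof. by elim: n. Qed.

Lemma reduced_wpow z n : reduced (z ++ z) -> reduced (wpow z n).
Proof.
case: z => [|a z] Hzz; first by rewrite wpow_nil.
elim: n => [|[|n] IH] //; first by rewrite wpow1; apply: reduced_catl Hzz.
by rewrite !wpowS; apply: reduced_join.
Qed.

Lemma reduced_root z m : 0 < m -> reduced (wpow z m ++ wpow z m) -> reduced (z ++ z).
Proof.
case: m => // m _; rewrite {1}wpowSr wpowS -!catA.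
by move/reduced_catr; rewrite catA => /reduced_catl.
Qed.

Lemma wpow_eq u v n : u ≡ v -> wpow u n ≡ wpow v n.
Proof.
move=> H; elim: n => //= n IH.
by rewrite !wpowS (reduce_catl_eq _ H); apply: reduce_catr_eq.
Qed.

Lemma comm_wpow x y n : comm x y -> comm x (wpow y n).
Proof. by move=> H; elim: n => [|n IH]; [apply: comm_nil | rewrite wpowS; apply: comm_cat]. Qed.

Lemma comm_wpow2 x y j l : comm x y -> comm (wpow x j) (wpow y l).
Proof. by move=> H; apply/comm_wpow/comm_sym/comm_wpow/comm_sym. Qed.

(* z^{-m} z^j = z^{-(m-j)} z^{j-m} with truncated subtraction: at most one
   of the two factors is nonempty. *)
Lemma wpow_cancel z m j :
  wpow (inv_word z) m ++ wpow z j ≡ wpow (inv_word z) (m - j) ++ wpow z (j - m).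
Proof.
elim: m j => [|m IH] [|j] //; rewrite ?cats0 //.
by rewrite !subSS -IH wpowSr wpowS -catA cancel_mid_inv.
Qed.

Lemma conj_wpow p x N :
  wpow (inv_word p ++ x ++ p) N ≡ inv_word p ++ wpow x N ++ p.
Proof.
elim: N => [|N IH]; first by rewrite /= reduce_inv_l.
by rewrite wpowS (reduce_catr_eq _ IH) conj_mul -wpowS.
Qed.

End Powers.

Section SeqPrefix.
Variable X : Type.
Implicit Types u v w : seq X.

Lemma catIl u v w : u ++ v = u ++ w -> v = w.
Proof. by elim: u => //= x u IH [/IH]. Qed.

Lemma prefix_of_cat u v w (w' : seq X) :
  u ++ w = v ++ w' -> size u <= size v -> exists v', v = u ++ v'.
Proof.
elim: u v => [|a u IH] v E H; first by exists v.
case: v E H => [|b v] //= [-> E] H.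
by have [v' ->] := IH _ E H; exists v'.
Qed.

End SeqPrefix.

Section CommutingWords.
Variable A : eqType.

Lemma commuting_words_powers (u v : word A) :
  u ++ v = v ++ u -> exists z i j, u = wpow z i /\ v = wpow z j.
Proof.
elim: {u v}(size u + size v) {-2}u {-2}v (leqnn (size u + size v)) => [|n IH] u v.
  by case: u v => [|? ?] [|? ?] //= _ _; exists [::], 0, 0.
case: u => [|a u] Hsz E; first by exists v, 0, 1; rewrite wpow1.
case: v Hsz E => [|b v] Hsz E; first by exists (a :: u), 1, 0; rewrite wpow1.
set U := a :: u in Hsz E *; set V := b :: v in Hsz E *.
case: (leqP (size U) (size V)) => H.
  have [v' Ev] := prefix_of_cat E H.
  rewrite Ev -catA in E; have E' := catIl E.
  have [|z [i [j [E1 E2]]]] := IH _ _ _ E'.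
    by move: Hsz; rewrite Ev size_cat /U /=; lia.
  by exists z, i, (i + j); rewrite Ev wpowD -E1 -E2.
have [u' Eu] := prefix_of_cat (esym E) (ltnW H).
rewrite Eu -catA in E; have E' := catIl E.
have [|z [i [j [E1 E2]]]] := IH _ _ _ E'.
  by move: Hsz; rewrite Eu size_cat /V /=; lia.
by exists z, (j + i), j; rewrite Eu wpowD -E1 -E2.
Qed.

Lemma nth_wpow x0 (z : word A) n i :
  i < n * size z -> nth x0 (wpow z n) i = nth x0 z (i %% size z).
Proof.
elim: n i => [|n IH] i //; rewrite mulSn wpowS nth_cat => Hi.
case: ifP => Hiz; first by rewrite modn_small.
have Hle : size z <= i by rewrite leqNgt Hiz.
by rewrite IH ?(ltn_subLR _ Hle) // -{2}(subnK Hle) modnDr.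
Qed.

(* Conversely, two words having a common power commute: they are both
   determined by one periodic sequence with periods |z| and |w|. *)
Lemma common_power_comm (z w : word A) m n :
  0 < m -> 0 < n -> wpow z m = wpow w n -> z ++ w = w ++ z.
Proof.
move=> Hm Hn E.
case: z E => [|a z'] E; first by rewrite cats0.
case: w E => [|b w'] E; first by rewrite cats0.
set z := a :: z' in E *; set w := b :: w' in E *.
have Hs : m * size z = n * size w by rewrite -!size_wpow E.
pose s i := nth a z (i %% size z).
have Psw i : s i = nth a w (i %% size w).
  set L := m * size z.
  have Hi : i %% L < m * size z by rewrite ltn_pmod // muln_gt0 Hm.
  rewrite /s -(modn_dvdm i (dvdn_mull m (dvdnn (size z)))) -/L.
  rewrite -(nth_wpow a Hi) E nth_wpow; last by rewrite -Hs.
  by rewrite /L Hs modn_dvdm // dvdn_mull.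
have Pz i : s (i + size z) = s i by rewrite /s modnDr.
have Pw i : s (i + size w) = s i by rewrite !Psw modnDr.
have Ez i : i < size z -> nth a z i = s i by move=> Hi; rewrite /s modn_small.
have Ew i : i < size w -> nth a w i = s i by move=> Hi; rewrite Psw modn_small.
apply: (@eq_from_nth _ a); first by rewrite !size_cat addnC.
move=> i; rewrite size_cat => Hi.
have -> : nth a (z ++ w) i = s i.
  rewrite nth_cat; case: ifP => H1; first by rewrite Ez.
  have H2 : size z <= i by rewrite leqNgt H1.
  by rewrite Ew ?(ltn_subLR _ H2) // -Pz subnK.
rewrite nth_cat; case: ifP => H1; first by rewrite Ew.
have H2 : size w <= i by rewrite leqNgt H1.
by rewrite Ez; [rewrite -[s (i - size w)]Pw subnK | lia].
Qed.

End CommutingWords.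

Section Centralizer.
Variable T : eqType.
Implicit Types (b c z : word T).

Lemma comm_cyclic_cases c b :
  c != [::] -> reduced (c ++ c) -> reduced b -> comm c b ->
  (exists b1, b = inv_word c ++ b1) \/
  exists z i j, [/\ 0 < i, c = wpow z i & b = wpow z j \/ b = wpow (inv_word z) j].
Proof.
move=> Hc Hcc Hb Hcomm.
have Hcr : reduced c := reduced_catl Hcc.
have [c1 [t [b1 [Ec Eb Er1]]]] := cancellation_split Hcr Hb.
have [b2 [s [c2 [Eb' Ec' Er2]]]] := cancellation_split Hb Hcr.
have Eq : c1 ++ b1 = b2 ++ c2 by rewrite -Er1 -Er2.
have S1 := congr1 size Ec; have S2 := congr1 size Eb.
have S3 := congr1 size Eb'; have S4 := congr1 size Ec'; have S5 := congr1 size Eq.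
rewrite ?size_cat ?size_inv_word in S1 S2 S3 S4 S5.
have Hst : size s = size t by lia.
have [Hc1|Hc1] := eqVneq c1 [::]; first by left; exists b1; rewrite Eb Ec Hc1.
right; have [Ht|Ht] := eqVneq t [::].
  (* no cancellation at all: c b = b c literally *)
  subst t; rewrite /= in Eb Ec Hst; rewrite cats0 in Ec; subst c1 b1.
  have Hs0 := size0nil Hst; subst s; rewrite cats0 in Eb'; rewrite /= in Ec'.
  subst b2 c2.
  have [z [i [j [E1 E2]]]] := commuting_words_powers Eq.
  exists z, i, j; split => //; last by left.
  by case: i E1 => // E1; move: Hc; rewrite E1.
have [Hb1|Hb1] := eqVneq b1 [::].
  (* b = t^{-1} for a suffix t of c = c1 t, and then c1 t = t c1 *)
  subst b1; rewrite cats0 in Eb.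
  have Hb2 : size b2 = 0 by move: S2; rewrite Eb size_inv_word; lia.
  move/size0nil: Hb2 => Hb2; subst b2; rewrite /= in Eb'.
  rewrite -Eb' Eb inv_wordK in Ec'.
  rewrite cats0 /= in Eq; subst c2.
  have [z [i [j [E1 E2]]]] := commuting_words_powers (etrans (esym Ec) Ec').
  exists z, (i + j), j; split.
  - by case: i j E1 E2 Ht Hc1 => [|i] [|j] //= ->.
  - by rewrite Ec wpowD E1 E2.
  - by right; rewrite Eb E2 inv_wpow.
(* Otherwise c = c1 t starts with the inverse of its last letter, which is
   impossible for a cyclically reduced word. *)
exfalso.
have Hb1s : 0 < size b1 by case: (b1) Hb1.
have Hb2 : 0 < size b2 by lia.
case/lastP: t Ht Ec Eb {S1 S2 S4 S5 Hst} => [|t' l] // _ Ec Eb.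
rewrite inv_word_rcons in Eb.
case: b2 Hb2 Eb' Eq Er2 S3 => [|x b2] // _ Eb' Eq _ _.
case: c1 Hc1 Ec Eq Er1 Hb1s => [|a c1] // _ Ec Eq _ _.
have Hx : x = inv_letter l by move: Eb'; rewrite Eb => -[].
have Ha : a = inv_letter l by move: Eq => /= -[-> _].
move: Hcc; rewrite Ec -cats1 Ha.
have := reduced_pair (inv_letter l :: c1 ++ t') (c1 ++ t' ++ [:: l]) l.
by rewrite -!catA /= -!catA /= => ->.
Qed.

Lemma centralizer_cyclic c b : c != [::] -> reduced (c ++ c) -> comm c b ->
  exists z m j, [/\ 0 < m, c = wpow z m & b ≡ wpow z j \/ b ≡ wpow (inv_word z) j].
Proof.
move=> Hc Hcc Hcb.
suff Hred : forall b', reduced b' -> comm c b' -> exists z m j,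
    [/\ 0 < m, c = wpow z m & b' ≡ wpow z j \/ b' ≡ wpow (inv_word z) j].
  have [z [m [j [Hm Ecz Hj]]]] :=
    Hred _ (reduced_reduce b) (comm_eqr (esym (reduce_idem b)) Hcb).
  by exists z, m, j; rewrite reduce_idem in Hj.
move=> b'; elim: {b'}(size b') {-2}b' (leqnn (size b')) => [|N IH] {Hcb}b Hsz Hb Hcb.
  by case: b Hsz {Hb Hcb} => // _; exists c, 1, 0; rewrite wpow1; split => //; left.
have [[b1 Eb] | [z [i [j [Hi Ecz Hbz]]]]] := comm_cyclic_cases Hc Hcc Hb Hcb; last first.
  by exists z, i, j; split => //; case: Hbz => ->; [left | right].
(* b = c^{-1} b1 with b1 shorter and still commuting with c *)
have Hb1 : reduced b1 by move: Hb; rewrite Eb => /reduced_catr.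
have Hs1 : size b1 <= N.
  by move: Hsz; rewrite Eb size_cat size_inv_word; case: (c) Hc => //= ? ? _; lia.
have Hb1e : b1 ≡ c ++ b by rewrite Eb -[c ++ _]cat0s cancel_mid.
have Hcb1 : comm c b1.
  rewrite /comm (reduce_catr_eq c Hb1e) (reduce_catl_eq c Hb1e) -catA.
  exact: reduce_catr_eq Hcb.
have [z [m [j [Hm Ecz Hj]]]] := IH b1 Hs1 Hb1 Hcb1.
exists z, m.
have Ebz : b ≡ wpow (inv_word z) m ++ b1 by rewrite Eb Ecz inv_wpow.
case: Hj => Hj; rewrite (reduce_catr_eq (wpow (inv_word z) m) Hj) in Ebz; last first.
  by exists (m + j); split => //; right; rewrite Ebz wpowD.
rewrite wpow_cancel in Ebz; case: (leqP m j) => Hmj.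
  by exists (j - m); split => //; left; rewrite Ebz (eqP Hmj).
by exists (m - j); split => //; right; rewrite Ebz (eqP (ltnW Hmj)) cats0.
Qed.

End Centralizer.

Section FreeGroupCommutation.
Variable T : eqType.
Implicit Types (a b c d g p x z : word T).

(* Commutative transitivity around a cyclically reduced word: both b and d
   are powers of roots of c, and two roots of c commute. *)
Lemma comm_trans_cyclic c b d :
  c != [::] -> reduced (c ++ c) -> comm c b -> comm c d -> comm b d.
Proof.
move=> Hc Hcc Hcb Hcd.
have [z [m [j [Hm Ecz Hb]]]] := centralizer_cyclic Hc Hcc Hcb.
have [w [n [l [Hn Ecw Hd]]]] := centralizer_cyclic Hc Hcc Hcd.
have Hzw : comm z w by rewrite /comm (common_power_comm Hm Hn (etrans (esym Ecz) Ecw)).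
have powers (Z W : word T) : comm Z W -> b ≡ wpow Z j -> d ≡ wpow W l -> comm b d.
  by move=> HZW Eb Ed; apply: comm_eql (esym Eb) (comm_eqr (esym Ed) (comm_wpow2 j l HZW)).
case: Hb => Eb; case: Hd => Ed; apply: powers Eb Ed.
- exact: Hzw.
- exact: comm_invr.
- exact: comm_invl.
- exact/comm_invl/comm_invr.
Qed.

Lemma comm_trans a b d : reduce a != [::] -> comm a b -> comm a d -> comm b d.
Proof.
move=> Ha Hab Had.
have [p [c [Ea Hc Hcc]]] := cyclic_decomposition (reduced_reduce a) Ha.
have Hpa : inv_word p ++ a ++ p ≡ c.
  by rewrite (reduce_ctx _ _ (esym (reduce_idem a))) Ea conjK.
apply: (unconj_comm (p := p)); apply: (comm_trans_cyclic Hc Hcc).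
- exact: comm_eql Hpa (comm_conj p Hab).
- exact: comm_eql Hpa (comm_conj p Had).
Qed.

Lemma square_trivial g : reduce (g ++ g) = [::] -> reduce g = [::].
Proof.
move=> H; have [//|Hg] := eqVneq (reduce g) [::]; exfalso.
have [p [d [Ed Hd Hdd]]] := cyclic_decomposition (reduced_reduce g) Hg.
have H1 : reduce (p ++ (d ++ d) ++ inv_word p) = [::].
  have := conj_mul (inv_word p) d d; rewrite inv_wordK => <-.
  by rewrite -Ed -reduce_catl -reduce_catr.
have := conjK p (d ++ d).
rewrite (reduce_ctx (inv_word p) p (u' := [::]) H1) reduce_inv_l reduce_id //.
by case: (d) Hd.
Qed.

Lemma cyclic_not_self_inverse c : c != [::] -> reduced (c ++ c) -> ~ c ≡ inv_word c.
Proof.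
move=> Hc Hcc H.
have := reduce_catr_eq c H; rewrite reduce_inv_r reduce_id //.
by case: (c) Hc.
Qed.

(* A cyclically reduced word is not conjugate to its inverse: otherwise g^2
   would centralise c, hence so would g (commutative transitivity), and then
   c = c^{-1}. *)
Lemma conj_not_inverse g c :
  c != [::] -> reduced (c ++ c) -> ~ inv_word g ++ c ++ g ≡ inv_word c.
Proof.
move=> Hc Hcc Hyc.
have Hg2 : comm (g ++ g) c.
  apply: conj_fix_comm; rewrite inv_word_cat -!catA.
  have := reduce_ctx (inv_word g) g Hyc; rewrite -!catA => ->.
  have := reduce_inv_eq Hyc; rewrite !inv_word_cat inv_wordK -!catA => ->.
  by rewrite inv_wordK.
have Hgc : comm g c.
  have [Hg|Hg] := eqVneq (reduce (g ++ g)) [::].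
    apply: (comm_eql (x := [::])); [by rewrite (square_trivial Hg) | exact/comm_sym/comm_nil].
  by apply: comm_trans Hg _ Hg2; rewrite /comm catA.
apply: (cyclic_not_self_inverse Hc Hcc); rewrite -Hyc.
by rewrite (reduce_catr_eq _ (esym Hgc)) (cancel_mid_inv [::] g c).
Qed.

Lemma eq_of_close_multiples m j A K :
  2 * K < A -> m * A <= j * A + 2 * K -> j * A <= m * A + 2 * K -> j = m.
Proof. nia. Qed.

(* If g^{-1} c g = Z^j in F(T), where c = z^m and Z are cyclically reduced and
   |Z| = |z|, then j = m: compare the lengths of the N-th powers of both sides
   for N > 2|g|. *)
Lemma conj_power_exponent g c z (Z : word T) m j :
  reduced (c ++ c) -> c = wpow z m -> 0 < size z -> reduced (Z ++ Z) ->
  size Z = size z -> inv_word g ++ c ++ g ≡ wpow Z j -> j = m.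
Proof.
move=> Hcc Ecz Hz HZZ HZs Hyj.
set N := (size g).*2.+1.
have E1 : reduce (inv_word g ++ wpow c N ++ g) = wpow Z (j * N).
  by rewrite -conj_wpow (wpow_eq N Hyj) wpowM reduce_id // reduced_wpow.
have E2 : wpow c N ≡ g ++ wpow Z (j * N) ++ inv_word g.
  rewrite -(conjVK g (wpow c N)); apply: reduce_ctx.
  by rewrite E1 reduce_id // reduced_wpow.
have L1 := size_reduce_ctx (inv_word g) (wpow c N) g.
have L2 := size_reduce_ctx g (wpow Z (j * N)) (inv_word g).
rewrite E1 reduce_id ?reduced_wpow // in L1.
rewrite -E2 !reduce_id ?reduced_wpow // in L2.
rewrite !size_wpow !size_inv_word Ecz size_wpow HZs in L1 L2.
apply: (@eq_of_close_multiples m j (N * size z) (size g)); [|nia|nia].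
by rewrite /N -mul2n; apply: leq_trans (leq_pmulr _ Hz); rewrite ltnS.
Qed.

(* If a cyclically reduced c commutes with its conjugate c^g, then g commutes
   with c: c^g lies in the centraliser of c, so it is c or c^{-1} by length,
   and the second case is excluded. *)
Lemma comm_conj_cyclic c g :
  c != [::] -> reduced (c ++ c) -> comm c (inv_word g ++ c ++ g) -> comm g c.
Proof.
move=> Hc Hcc H.
have [z [m [j [Hm Ecz Hj]]]] := centralizer_cyclic Hc Hcc H.
have Hzz : reduced (z ++ z) by apply: (reduced_root Hm); rewrite -Ecz.
have Hz : 0 < size z by case: (z) Ecz => // Ecz; move: Hc; rewrite Ecz wpow_nil.
case: Hj => Hj.
  have Hjm := conj_power_exponent Hcc Ecz Hz Hzz erefl Hj; subst j.
  by apply: conj_fix_comm; rewrite Hj -Ecz.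
have HZZ : reduced (inv_word z ++ inv_word z) by rewrite -inv_word_cat reduced_inv.
have Hjm := conj_power_exponent Hcc Ecz Hz HZZ (size_inv_word z) Hj; subst j.
by case: (conj_not_inverse (g := g) Hc Hcc); rewrite Hj Ecz inv_wpow.
Qed.

(* The same for any x <> 1, by conjugating to a cyclically reduced word. *)
Lemma comm_conj_comm x g :
  reduce x != [::] -> comm x (inv_word g ++ x ++ g) -> comm g x.
Proof.
move=> Hx H.
have [p [c [Ex Hc Hcc]]] := cyclic_decomposition (reduced_reduce x) Hx.
have Hpx : inv_word p ++ x ++ p ≡ c.
  by rewrite (reduce_ctx _ _ (esym (reduce_idem x))) Ex conjK.
set g' := inv_word p ++ g ++ p.
have E : inv_word p ++ (inv_word g ++ x ++ g) ++ p ≡ inv_word g' ++ c ++ g'.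
  have -> : inv_word g' = inv_word p ++ inv_word g ++ p.
    by rewrite /g' !inv_word_cat inv_wordK catA.
  rewrite (reduce_ctx (inv_word p ++ inv_word g ++ p) g' (esym Hpx)).
  by rewrite (reduce_catr_eq _ (conj_mul p x g)) conj_mul.
have Hc' : comm c (inv_word g' ++ c ++ g').
  exact: comm_eqr E (comm_eql Hpx (comm_conj p H)).
by move: (comm_conj_cyclic Hc Hcc Hc') => /(comm_eqr (esym Hpx)) /unconj_comm.
Qed.

End FreeGroupCommutation.

Section Homomorphism.
Variables (S : Type) (T : eqType) (f : S -> word T).
Implicit Types (l : S * bool) (u v w r : word S).

Lemma subst_cat u v : subst f (u ++ v) = subst f u ++ subst f v.
Proof. by rewrite /subst map_cat flatten_cat. Qed.

Lemma subst_cons l v :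
  subst f (l :: v) = (if l.2 then inv_word (f l.1) else f l.1) ++ subst f v.
Proof. by []. Qed.

Lemma subst_inv w : subst f (inv_word w) = inv_word (subst f w).
Proof.
elim: w => // l w IH.
rewrite inv_word_cons subst_cat IH subst_cons inv_word_cat; congr (_ ++ _).
by case: l => a [] /=; rewrite /subst /= cats0 ?inv_wordK.
Qed.

Lemma subst_conj s r : subst f (conjw s r) = inv_word (f s) ++ subst f r ++ f s.
Proof. by rewrite /conjw subst_cons subst_cat /= /subst /= cats0. Qed.

Lemma subst_commw u v :
  subst f (commw u v) =
  inv_word (subst f u) ++ inv_word (subst f v) ++ subst f u ++ subst f v.
Proof. by rewrite /commw !subst_cat !subst_inv. Qed.

Lemma abelian_image :
  (forall s s', comm (f s) (f s')) -> forall u v, comm (subst f u) (subst f v).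
Proof.
move=> H.
have Hgen s v : comm (f s) (subst f v).
  elim: v => [|l v IH]; first exact: comm_nil.
  rewrite subst_cons; apply: comm_cat => //.
  by case: (l.2); [apply: comm_invr | apply: H].
elim=> [|l u IH] v; first exact/comm_sym/comm_nil.
rewrite subst_cons; apply/comm_sym/comm_cat; last exact/comm_sym.
by case: (l.2); [apply: comm_invr|]; apply/comm_sym.
Qed.

Lemma abelian_image_of_comm_conj x h :
  reduce x != [::] -> reduce h != [::] -> comm x h ->
  (forall s, comm (inv_word (f s) ++ x ++ f s) h) ->
  forall u v, comm (subst f u) (subst f v).
Proof.
move=> Hx Hh Hxh Hconj.
have Hsx s : comm (f s) x.
  by apply: comm_conj_comm Hx _; apply: comm_trans Hh (comm_sym Hxh) (comm_sym (Hconj s)).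
by apply: abelian_image => s s'; apply: comm_trans Hx (comm_sym (Hsx s)) (comm_sym (Hsx s')).
Qed.

End Homomorphism.

Section IteratedCommutators.
Variables (S : finType) (T : eqType) (f : S -> word T).
Implicit Types (A B : seq (word S)).

Lemma mem_commset A B w :
  w \in commset A B -> exists u v, [/\ u \in conjS0 A, v \in B & w = commw u v].
Proof. by case/allpairsP => [[u v] [/= Hu Hv ->]]; exists u, v. Qed.

Lemma mem_conjS0 A u :
  u \in conjS0 A -> u \in A \/ exists s r, r \in A /\ u = conjw s r.
Proof.
rewrite mem_cat => /orP[H|]; first by left.
by case/allpairsP => [[s r] [/= _ Hr ->]]; right; exists s, r.
Qed.

Lemma conjS0_self A r : r \in A -> r \in conjS0 A.
Proof. by move=> H; rewrite mem_cat H. Qed.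

Lemma conjS0_conj A s r : r \in A -> conjw s r \in conjS0 A.
Proof. by move=> H; rewrite mem_cat allpairs_f ?orbT ?mem_enum. Qed.

Lemma kills_conjS0 A : (forall r, r \in A -> kills f r) ->
  forall u, u \in conjS0 A -> kills f u.
Proof.
move=> HA u /mem_conjS0 [/HA //|[s [r [/HA Hr ->]]]].
by rewrite /kills subst_conj trivial_conj.
Qed.

Lemma kills_commset_l A B : (forall u, u \in A -> kills f u) ->
  forall w, w \in commset A B -> kills f w.
Proof.
move=> HA w /mem_commset [u [v [/(kills_conjS0 HA) Hu _ ->]]].
by rewrite /kills subst_commw commw_trivial_l.
Qed.

Lemma kills_commset_r A B : (forall v, v \in B -> kills f v) ->
  forall w, w \in commset A B -> kills f w.
Proof.
move=> HB w /mem_commset [u [v [_ /HB Hv ->]]].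
by rewrite /kills subst_commw commw_trivial_r.
Qed.

Lemma nonkilled_commset A B v r :
  nonabelian_image f -> v \in B -> ~ kills f v -> r \in A -> ~ kills f r ->
  exists w, w \in commset A B /\ ~ kills f w.
Proof.
move=> [u [u' Hnab]] Hv Hvk Hr Hrk.
have [/hasP [w Hw /eqP Hwk] | /hasPn Hall] :=
  boolP (has (fun w => reduce (subst f w) != [::]) (commset A B)); first by exists w.
have Hcomm u0 : u0 \in conjS0 A -> comm (subst f u0) (subst f v).
  move=> Hu0; apply: comm_of_commw; rewrite -subst_commw; apply/eqP/negPn.
  exact/Hall/allpairs_f.
case: Hnab; rewrite !subst_cat.
apply: (@abelian_image_of_comm_conj _ _ f (subst f r) (subst f v)).
- exact/eqP.
- exact/eqP.
- exact/Hcomm/conjS0_self.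
- by move=> s; rewrite -subst_conj; apply/Hcomm/conjS0_conj.
Qed.

Variable R : nat -> seq (word S).

Lemma RtildeSS k : Rtilde R k.+2 = commset (R k.+2) (Rtilde R k.+1).
Proof. by []. Qed.

Lemma kills_Rtilde k i : 1 <= i <= k -> (forall w, w \in R i -> kills f w) ->
  forall w, w \in Rtilde R k -> kills f w.
Proof.
move=> + HR; elim: k => [|[|k] IH] Hi; first lia.
  by have Ei : i = 1 by [lia]; subst i; exact: HR.
have [Eik | Hik] := eqVneq i k.+2; rewrite RtildeSS.
  by rewrite Eik in HR; apply: kills_commset_l.
by apply/kills_commset_r/IH; lia.
Qed.

Lemma nonkilled_Rtilde n : nonabelian_image f ->
  (forall i, 1 <= i <= n -> exists w, w \in R i /\ ~ kills f w) ->
  forall k, 1 <= k <= n -> exists w, w \in Rtilde R k /\ ~ kills f w.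
Proof.
move=> Hnab Hex; elim=> [|[|k] IH] Hk; first lia; first exact: Hex.
have [|v [Hv Hvk]] := IH; first lia.
have [r [Hr Hrk]] := Hex k.+2 Hk.
by rewrite RtildeSS; apply: nonkilled_commset Hnab Hv Hvk Hr Hrk.
Qed.

End IteratedCommutators.

Unset Implicit Arguments.

Theorem mainTheorem10 (S : finType) (T : eqType) (n : nat) (R : nat -> seq (word S))
    (f : S -> word T) :
  2 <= n ->
  nonabelian_image f ->
  (forall w, w \in Rtilde R n -> kills f w) <->
  (exists i, 1 <= i <= n /\ forall w, w \in R i -> kills f w).
Proof.
move=> Hn Hnab; split; last by case=> i [Hi HR]; apply: kills_Rtilde Hi HR.
move=> Hall.
have [/hasP [i Hi /allP HR] | /hasPn Hno] :=
  boolP (has (fun i => all (fun w => reduce (subst f w) == [::]) (R i)) (iota 1 n)).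
  by exists i; split=> [|w /HR /eqP //]; move: Hi; rewrite mem_iota; lia.
have Hex i : 1 <= i <= n -> exists w, w \in R i /\ ~ kills f w.
  move=> Hi; have : i \in iota 1 n by rewrite mem_iota; lia.
  by move/Hno/allPn => [w Hw /eqP Hwk]; exists w.
have [|w [Hw Hwk]] := nonkilled_Rtilde Hnab Hex (k := n); first lia.
by case: (Hwk (Hall w Hw)).
Qed.
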